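(* Let $\mathfrak{g}$ be a finite-dimensional real solvable Lie algebra equipped with an invariant scalar product $\langle\cdot,\cdot\rangle$ of Lorentzian signature (Witt index $1$) which is Einstein. Then $\mathfrak{g}$ is abelian.
   Context: A scalar product is a non-degenerate symmetric bilinear form; it is invariant if $\langle [x,y_1],y_2\rangle=-\langle y_1,[x,y_2]\rangle$ for all $x,y_1,y_2\in\mathfrak{g}$. It is Einstein if the bi-invariant metric on a connected Lie group with Lie algebra $\mathfrak{g}$ obtained by left translation of $\langle\cdot,\cdot\rangle$ is Einstein ($\mathrm{Ric}=\lambda\mathtt{g}$); for solvable $\mathfrak{g}$ this is equivalent to the vanishing of the Killing form. *)

From HB Require Import structures.
From mathcomp Require Import all_boot all_order all_algebra.
From mathcomp Require Import reals.
Set Implicit Arguments. Unset Strict Implicit. Unset Printing Implicit Defensive.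
Import Order.TTheory GRing.Theory Num.Theory.
Local Open Scope ring_scope.

Section LieDefs.
Variables (R : realType) (n : nat).
Local Notation V := 'rV[R]_n.

Definition is_lie_bracket (br : V -> V -> V) : Prop :=
  [/\ (forall (a : R) (x y z : V), br (a *: x + y) z = a *: br x z + br y z),
      (forall (a : R) (x y z : V), br x (a *: y + z) = a *: br x y + br x z),
      (forall x : V, br x x = 0) &
      (forall x y z : V, br x (br y z) + br y (br z x) + br z (br x y) = 0)].

(* Derived subalgebra of the subspace spanned by the rows of W:
   span of all brackets of elements of W (by bilinearity, of rows of W). *)
Definition derived_mx (br : V -> V -> V) (W : 'M[R]_n) : 'M[R]_n :=
  (\sum_(i < n) \sum_(j < n) <<br (row i W) (row j W)>>)%MS.

Definition derived_series (br : V -> V -> V) (k : nat) : 'M[R]_n :=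
  iter k (derived_mx br) (1%:M).

Definition solvable_lie (br : V -> V -> V) : Prop :=
  exists k, derived_series br k = 0.

Definition abelian_lie (br : V -> V -> V) : Prop :=
  forall x y : V, br x y = 0.

Definition sp (S : 'M[R]_n) (x y : V) : R := (x *m S *m y^T) 0 0.

Definition scalar_product (S : 'M[R]_n) : Prop := S^T = S /\ S \in unitmx.

(* Witt index 1: there is a nonzero isotropic vector, and no 2-dimensional
   totally isotropic subspace (maximal totally isotropic subspaces have dim 1). *)
Definition witt_index_one (S : 'M[R]_n) : Prop :=
  (exists v : V, v != 0 /\ sp S v v = 0) /\
  (forall U : 'M[R]_(2, n), \rank U = 2%N -> U *m S *m U^T != 0).

Definition invariant_sp (br : V -> V -> V) (S : 'M[R]_n) : Prop :=
  forall x y1 y2 : V, sp S (br x y1) y2 = - sp S y1 (br x y2).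

(* ad x as a matrix acting on row vectors: v *m ad_mx br x = br x v. *)
Definition ad_mx (br : V -> V -> V) (x : V) : 'M[R]_n := lin1_mx (br x).

Definition killing (br : V -> V -> V) (x y : V) : R :=
  \tr (ad_mx br x *m ad_mx br y).

(* Ricci tensor of the bi-invariant (pseudo-Riemannian) metric obtained by
   left translation of an invariant scalar product: Ric = -1/4 B. *)
Definition ricci_biinv (br : V -> V -> V) (x y : V) : R :=
  - (4%:R)^-1 * killing br x y.

Definition einstein (br : V -> V -> V) (S : 'M[R]_n) : Prop :=
  exists lam : R, forall x y : V, ricci_biinv br x y = lam * sp S x y.

End LieDefs.

(* Let I = [g, g]; by invariance its orthogonal I^perp is central.  If
   I meets I^perp trivially, then g = I + I^perp, so I = [I, I] and solvability
   forces I = 0.  Otherwise a nonzero z in I :&: I^perp is central and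
   isotropic; then ad z = 0, so the Einstein constant is 0 and the Killing form
   vanishes.  Complete z to a hyperbolic pair (z, e); Witt index one makes the
   orthogonal complement W of span(z, e) definite.  Each ad x is skew, kills z
   and has tr (ad x)^2 = 0, so its compression to W is a skew map of a definite
   space with tr N^2 = 0, i.e. N = 0; hence ad x maps z^perp into R z.  Then
   [g, g] lies in R z, z^perp is central, and g = R e + z^perp is abelian. *)

From HB Require Import structures.
From mathcomp Require Import all_boot all_order all_algebra.
From mathcomp Require Import reals.
From mathcomp Require Import ring lra.
Import Order.TTheory GRing.Theory Num.Theory.
Local Open Scope ring_scope.
Set Implicit Arguments. Unset Strict Implicit. Unset Printing Implicit Defensive.

Section LieBracket.
Variables (R : realType) (n : nat) (br : 'rV[R]_n -> 'rV[R]_n -> 'rV[R]_n).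
Hypothesis br_lie : is_lie_bracket br.

Lemma brDl x y z : br (x + y) z = br x z + br y z.
Proof. by case: br_lie => linl _ _ _; have := linl 1 x y z; rewrite !scale1r. Qed.

Lemma br0l z : br 0 z = 0.
Proof. by apply: (addrI (br 0 z)); rewrite -brDl !addr0. Qed.

Lemma brZl a x z : br (a *: x) z = a *: br x z.
Proof. by case: br_lie => linl _ _ _; have := linl a x 0 z; rewrite !addr0 br0l addr0. Qed.

Lemma brDr x y z : br z (x + y) = br z x + br z y.
Proof. by case: br_lie => _ linr _ _; have := linr 1 z x y; rewrite !scale1r. Qed.

Lemma br0r z : br z 0 = 0.
Proof. by apply: (addrI (br z 0)); rewrite -brDr !addr0. Qed.

Lemma brZr a x z : br z (a *: x) = a *: br z x.
Proof. by case: br_lie => _ linr _ _; have := linr a z x 0; rewrite !addr0 br0r addr0. Qed.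

Lemma brxx x : br x x = 0.
Proof. by case: br_lie. Qed.

Lemma brC x y : br x y = - br y x.
Proof.
apply/eqP; rewrite -addr_eq0; have := brxx (x + y).
by rewrite brDl !brDr !brxx add0r addr0 => ->.
Qed.

Lemma br_sumr I (r : seq I) (P : pred I) (F : I -> 'rV[R]_n) z :
  br z (\sum_(i <- r | P i) F i) = \sum_(i <- r | P i) br z (F i).
Proof. by elim/big_rec2: _ => [|i y1 y2 _ <-]; rewrite ?br0r ?brDr. Qed.

Lemma br_suml I (r : seq I) (P : pred I) (F : I -> 'rV[R]_n) z :
  br (\sum_(i <- r | P i) F i) z = \sum_(i <- r | P i) br (F i) z.
Proof. by elim/big_rec2: _ => [|i y1 y2 _ <-]; rewrite ?br0l ?brDl. Qed.

Lemma ad_mxE x v : v *m ad_mx br x = br x v.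
Proof.
rewrite /ad_mx {2}(row_sum_delta v) br_sumr.
by apply/rowP => j; rewrite mxE summxE; apply: eq_bigr => i _; rewrite brZr !mxE.
Qed.

End LieBracket.

Lemma mulmx_rV_eq (R : pzSemiRingType) n p (A B : 'M[R]_(n, p)) :
  (forall u : 'rV[R]_n, u *m A = u *m B) -> A = B.
Proof. by move=> eqAB; apply/row_matrixP => i; rewrite !rowE eqAB. Qed.

Section SymmetricForm.
Variables (R : realType) (n : nat) (S : 'M[R]_n).
Hypothesis S_sym : S^T = S.
Local Notation V := 'rV[R]_n.

Lemma spE x y : x *m S *m y^T = (sp S x y)%:M.
Proof. exact: mx11_scalar. Qed.

Lemma sp_delta x j : sp S x (delta_mx 0 j) = (x *m S) 0 j.
Proof. by rewrite /sp trmx_delta -colE mxE. Qed.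

Lemma spC x y : sp S x y = sp S y x.
Proof.
transitivity ((x *m S *m y^T)^T 0 0); first by rewrite mxE.
by rewrite !trmx_mul trmxK S_sym mulmxA.
Qed.

Lemma spDl x y z : sp S (x + y) z = sp S x z + sp S y z.
Proof. by rewrite /sp !mulmxDl mxE. Qed.

Lemma spZl a x z : sp S (a *: x) z = a * sp S x z.
Proof. by rewrite /sp -!scalemxAl mxE. Qed.

Lemma sp0l z : sp S 0 z = 0.
Proof. by rewrite -(scale0r 0) spZl mul0r. Qed.

Lemma sp0r z : sp S z 0 = 0.
Proof. by rewrite /sp trmx0 mulmx0 mxE. Qed.

Lemma spNl x z : sp S (- x) z = - sp S x z.
Proof. by rewrite -scaleN1r spZl mulN1r. Qed.

Lemma spBl x y z : sp S (x - y) z = sp S x z - sp S y z.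
Proof. by rewrite spDl spNl. Qed.

Lemma sp_suml I (r : seq I) (P : pred I) (F : I -> V) z :
  sp S (\sum_(i <- r | P i) F i) z = \sum_(i <- r | P i) sp S (F i) z.
Proof. by elim/big_rec2: _ => [|i y1 y2 _ <-]; rewrite ?sp0l ?spDl. Qed.

Lemma spDr x y z : sp S z (x + y) = sp S z x + sp S z y.
Proof. by rewrite !(spC z) spDl. Qed.

Lemma spZr a x z : sp S z (a *: x) = a * sp S z x.
Proof. by rewrite !(spC z) spZl. Qed.

Lemma spNr x z : sp S z (- x) = - sp S z x.
Proof. by rewrite !(spC z) spNl. Qed.

Lemma spBr x y z : sp S z (x - y) = sp S z x - sp S z y.
Proof. by rewrite !(spC z) spBl. Qed.

Lemma sp_skew (A : 'M[R]_n) u v :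
  A *m S = - (S *m A^T) -> sp S (u *m A) v = - sp S u (v *m A).
Proof. by move=> A_skew; rewrite /sp -(mulmxA u) A_skew mulmxN mulNmx mxE trmx_mul !mulmxA. Qed.

Hypothesis S_unit : S \in unitmx.

Lemma sp_neq0 x : x != 0 -> exists y, sp S x y != 0.
Proof.
move=> x_neq0; have /negP xS_neq0 : x *m S != 0 by rewrite mulmx_free_eq0 ?row_free_unit.
case: (pickP (fun j => (x *m S) 0 j != 0)) => [j xSj | xS0].
  by exists (delta_mx 0 j); rewrite sp_delta.
by case: xS_neq0; apply/eqP/rowP => j; move/negbFE/eqP: (xS0 j) => ->; rewrite mxE.
Qed.

Lemma sp_nondeg x : (forall y, sp S x y = 0) -> x = 0.
Proof. by move=> x_orth; apply/eqP; apply: contraT => /sp_neq0 [y]; rewrite x_orth eqxx. Qed.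

End SymmetricForm.

Lemma sp_inj (R : realType) n (M M' : 'M[R]_n) :
  (forall u v, sp M u v = sp M' u v) -> M = M'.
Proof.
move=> eqMM'; apply/matrixP => i j; have := eqMM' (delta_mx 0 i) (delta_mx 0 j).
by rewrite !sp_delta -!rowE !mxE.
Qed.

Lemma unit_row_neq0 (R : fieldType) n (D : 'M[R]_n) i : D \in unitmx -> row i D != 0.
Proof.
move=> D_unit; rewrite rowE mulmx_free_eq0 ?row_free_unit //.
by apply/eqP => /matrixP /(_ 0 i); rewrite !mxE !eqxx; apply/eqP; rewrite oner_eq0.
Qed.

Lemma gram_mxE (R : realType) m n (A B : 'M[R]_(m, n)) (G : 'M[R]_n) i j :
  (A *m G *m B^T) i j = sp G (row i A) (row j B).
Proof. by rewrite /sp -row_mul !mxE; apply: eq_bigr => l _; rewrite !mxE. Qed.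

Section DefiniteForm.
Variables (R : realType) (n : nat) (G : 'M[R]_n).
Hypothesis G_sym : G^T = G.
Hypothesis G_pos : forall u : 'rV[R]_n, u != 0 -> 0 < sp G u u.

Lemma sp_ge0 u : 0 <= sp G u u.
Proof. by have [->|/G_pos/ltW //] := eqVneq u 0; rewrite sp0l. Qed.

Definition orthogonal_rows k (D : 'M[R]_n) := forall i j : 'I_n,
  (i < k)%N -> (j < k)%N -> i != j -> sp G (row i D) (row j D) = 0.

Lemma orthogonal_rows_step k (D : 'M[R]_n) : (k < n)%N -> D \in unitmx ->
  orthogonal_rows k D -> exists2 D', D' \in unitmx & orthogonal_rows k.+1 D'.
Proof.
move=> k_lt D_unit D_orth; pose kk := Ordinal k_lt.
pose c i := sp G (row kk D) (row i D) / sp G (row i D) (row i D).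
pose v := row kk D - \sum_(i < n | (i < k)%N) c i *: row i D.
pose D' := \matrix_i (if i == kk then v else row i D).
have rowD' i : row i D' = if i == kk then v else row i D by rewrite rowK.
have v_orth (j : 'I_n) : (j < k)%N -> sp G v (row j D) = 0.
  move=> j_lt; rewrite spBl sp_suml (bigD1 j) //= big1 => [|i /andP[i_lt ij]].
    by rewrite spZl addr0 divfK ?subrr // gt_eqF ?G_pos ?unit_row_neq0.
  by rewrite spZl D_orth ?mulr0.
have lt_k (i : 'I_n) : (i < k.+1)%N -> i != kk -> (i < k)%N.
  by rewrite ltnS leq_eqVlt => /orP[/eqP ik|//]; rewrite -(inj_eq val_inj) /= ik eqxx.
exists D'.
  rewrite -row_full_unit -sub1mx (submx_trans _ (_ : D <= D')%MS) ?sub1mx ?row_full_unit //.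
  apply/row_subP => i; have [-> | ikk] := eqVneq i kk; last first.
    by have := row_sub i D'; rewrite rowD' (negPf ikk).
  rewrite -(subrK (\sum_(i < n | (i < k)%N) c i *: row i D) (row kk D)) -/v.
  rewrite addmx_sub //; first by have := row_sub kk D'; rewrite rowD' eqxx.
  apply: summx_sub => l l_lt; apply: scalemx_sub.
  by have := row_sub l D'; rewrite rowD' ifN // -(inj_eq val_inj) neq_ltn l_lt.
move=> i j i_lt j_lt ij; rewrite !rowD'.
have [ikk | ikk] := eqVneq i kk; have [jkk | jkk] := eqVneq j kk.
- by move: ij; rewrite ikk jkk eqxx.
- by rewrite v_orth ?lt_k.
- by rewrite spC ?v_orth ?lt_k.
- by rewrite D_orth ?lt_k.
Qed.

Lemma orthogonal_basis : exists2 D : 'M[R]_n, D \in unitmx &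
  forall i j, i != j -> sp G (row i D) (row j D) = 0.
Proof.
suff /(_ n (leqnn n)) [D D_unit D_orth] : forall k, (k <= n)%N ->
    exists2 D : 'M[R]_n, D \in unitmx & orthogonal_rows k D.
  by exists D => // i j; apply: D_orth.
elim=> [|k IHk] k_le; first by exists 1%:M; rewrite ?unitmx1.
have [D D_unit D_orth] := IHk (ltnW k_le).
exact: orthogonal_rows_step D_unit D_orth.
Qed.

Lemma mxtrace_orthogonal_basis (D T : 'M[R]_n) : D \in unitmx ->
    (forall i j, i != j -> sp G (row i D) (row j D) = 0) ->
  \tr T = \sum_i sp G (row i D *m T) (row i D) / sp G (row i D) (row i D).
Proof.
move=> D_unit D_orth; pose M := D *m T *m invmx D.
have -> : \tr T = \tr M by rewrite mxtrace_mulC mulmxA mulVmx ?mul1mx.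
have MDl : M *m (D *m G *m D^T) = D *m T *m G *m D^T by rewrite /M !mulmxA mulmxKV.
clearbody M; apply: eq_bigr => i _; have := congr1 (fun A : 'M_n => A i i) MDl.
rewrite gram_mxE !mxE (bigD1 i) //= big1 => [|j ji]; last first.
  by rewrite gram_mxE D_orth ?mulr0.
rewrite gram_mxE addr0 row_mul => <-.
by rewrite mulfK // gt_eqF ?G_pos ?unit_row_neq0.
Qed.

Lemma skew_sqr_trace_eq0 (N : 'M[R]_n) :
  N *m G = - (G *m N^T) -> \tr (N *m N) = 0 -> N = 0.
Proof.
move=> N_skew trNN.
have [D D_unit D_orth] := orthogonal_basis.
have d_pos i : 0 < sp G (row i D) (row i D) by rewrite G_pos ?unit_row_neq0.
have terms_ge0 i : 0 <= sp G (row i D *m N) (row i D *m N) / sp G (row i D) (row i D).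
  by rewrite divr_ge0 ?sp_ge0 ?ltW.
have sum_eq : \sum_i sp G (row i D *m N) (row i D *m N) / sp G (row i D) (row i D)
    = - \tr (N *m N).
  rewrite (mxtrace_orthogonal_basis _ D_unit D_orth) -sumrN.
  by apply: eq_bigr => i _; rewrite mulmxA (sp_skew (row i D *m N) _ N_skew) mulNr opprK.
move: sum_eq; rewrite trNN oppr0 => /psumr_eq0P rowsN0.
suff DN0 : D *m N = 0 by rewrite -(mulKmx D_unit N) DN0 mulmx0.
apply/row_matrixP => i; rewrite row_mul row0; apply/eqP; apply: contraT => rowN_neq0.
have /eqP := rowsN0 (fun i _ => terms_ge0 i) i isT.
by rewrite mulf_eq0 invr_eq0 (gt_eqF (d_pos i)) (gt_eqF (G_pos rowN_neq0)).
Qed.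

End DefiniteForm.

Section Lorentzian.
Variables (R : realType) (n : nat) (S : 'M[R]_n).
Hypothesis S_sym : S^T = S.
Local Notation V := 'rV[R]_n.

Section Anisotropic.
Variables (m : nat) (U : 'M[R]_(m, n)).
Hypothesis U_aniso : forall w, (w <= U)%MS -> sp S w w = 0 -> w = 0.

Lemma anisotropic_not_indefinite u v : (u <= U)%MS -> (v <= U)%MS ->
  0 < sp S u u -> sp S v v < 0 -> False.
Proof.
move=> uU vU u_pos v_neg.
set a := sp S u u in u_pos *; set c := sp S v v in v_neg *; set b := sp S u v.
have disc_ge0 : 0 <= b ^+ 2 - a * c by have := sqr_ge0 b; nra.
(* t is a root of q (u + t v) = a + 2 b t + c t^2, whose discriminant is > 0. *)
pose s := Num.sqrt (b ^+ 2 - a * c); pose t := (- b - s) / c.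
have ct : c * t = - b - s by rewrite mulrC divfK ?lt_eqF.
have root_t : a + 2 * b * t + c * t ^+ 2 = 0.
  suff /eqP : c * (a + 2 * b * t + c * t ^+ 2) = 0 by rewrite mulf_eq0 lt_eqF // => /eqP.
  transitivity (a * c + 2 * b * (c * t) + (c * t) ^+ 2); first by ring.
  rewrite ct; transitivity (a * c - b ^+ 2 + s ^+ 2); first by ring.
  by rewrite sqr_sqrtr //; ring.
have /eqP : u + t *: v = 0.
  apply: U_aniso; first by rewrite addmx_sub ?scalemx_sub.
  by rewrite spDl !spDr // !spZl !spZr // (spC S_sym v u) -/a -/b -/c -root_t; ring.
rewrite addr_eq0 => /eqP uE.
have : a = t ^+ 2 * c by rewrite /a uE spNl spNr // opprK spZl spZr // -/c mulrA.
by have := sqr_ge0 t; nra.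
Qed.

Lemma anisotropic_definite :
  exists sg : R, forall w, (w <= U)%MS -> w != 0 -> 0 < sg * sp S w w.
Proof.
have [U0 | /rowV0Pn[v vU v_neq0]] := eqVneq U 0.
  by exists 1 => w; rewrite U0 => /submx0null ->; rewrite eqxx.
have q_neq0 w : (w <= U)%MS -> w != 0 -> sp S w w != 0.
  by move=> wU; apply: contraNneq => /(U_aniso wU) ->.
exists (sp S v v) => w wU w_neq0.
have qv := q_neq0 _ vU v_neq0; have qw := q_neq0 _ wU w_neq0.
have [qv_pos|qv_neg|qv0] := ltrgt0P (sp S v v); last by rewrite qv0 eqxx in qv.
  rewrite pmulr_rgt0 //; have [//|qw_neg|qw0] := ltrgt0P (sp S w w).
    by case: (anisotropic_not_indefinite vU wU qv_pos qw_neg).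
  by rewrite qw0 eqxx in qw.
rewrite nmulr_rgt0 //; have [qw_pos|//|qw0] := ltrgt0P (sp S w w).
  by case: (anisotropic_not_indefinite wU vU qw_pos qv_neg).
by rewrite qw0 eqxx in qw.
Qed.

End Anisotropic.

Lemma witt_index_one_isotropic (z w : V) : witt_index_one S -> z != 0 ->
  sp S z z = 0 -> sp S w z = 0 -> sp S w w = 0 -> exists k, w = k *: z.
Proof.
move=> [_ no_iso_plane] z_neq0 zz wz ww; apply/sub_rVP; apply: contraT => w_notin_z.
have rank_zw : \rank (col_mx z w) = 2.
  rewrite -addsmxE; apply/eqP; rewrite eqn_leq addsmxE rank_leq_row -addsmxE /=.
  have : (z < z + w)%MS by rewrite ltmxE addsmxSl addsmx_sub submx_refl.
  by rewrite ltmxErank rank_rV z_neq0 => /andP[_].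
have gram0 : col_mx z w *m S *m (col_mx z w)^T = 0.
  rewrite tr_col_mx mul_col_mx mul_col_row !spE zz ww wz (spC S_sym z w) wz.
  by rewrite !raddf0 block_mx0.
by have := no_iso_plane _ rank_zw; rewrite gram0 eqxx.
Qed.

Lemma hyperbolic_partner (z : V) : S \in unitmx -> z != 0 -> sp S z z = 0 ->
  exists2 e, sp S e z = 1 & sp S e e = 0.
Proof.
move=> S_unit z_neq0 z_iso; have [y yz] := sp_neq0 S_unit z_neq0.
have [e0 e0z] : exists e0, sp S e0 z = 1.
  by exists ((sp S y z)^-1 *: y); rewrite spZl mulVf // (spC S_sym).
exists (e0 - (sp S e0 e0 / 2) *: z); first by rewrite spBl spZl z_iso mulr0 subr0.
rewrite spBl !spBr // !spZl !spZr // z_iso (spC S_sym z e0) e0z; lra.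
Qed.

Section HyperbolicPair.
Variables z e : V.
Hypotheses (z_iso : sp S z z = 0) (e_iso : sp S e e = 0) (ez : sp S e z = 1).

Definition hyperbolic_compl : 'M[R]_n := (kermx (S *m z^T) :&: kermx (S *m e^T))%MS.

Lemma sub_hyperbolic_compl w :
  (w <= hyperbolic_compl)%MS = (sp S w z == 0) && (sp S w e == 0).
Proof. by rewrite sub_capmx !sub_kermx !mulmxA !spE !fmorph_eq0. Qed.

Lemma witt_index_one_compl_anisotropic : witt_index_one S -> z != 0 ->
  forall w, (w <= hyperbolic_compl)%MS -> sp S w w = 0 -> w = 0.
Proof.
move=> witt1 z_neq0 w; rewrite sub_hyperbolic_compl => /andP[/eqP wz /eqP we] ww.
have [k wE] := witt_index_one_isotropic witt1 z_neq0 z_iso wz ww.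
by move: we; rewrite wE spZl (spC S_sym z e) ez mulr1 => ->; rewrite scale0r.
Qed.

Definition hyperbolic_proj : 'M[R]_n := S *m z^T *m e + S *m e^T *m z.
(* Locked, so that matrix rewriting never unfolds it. *)
Definition compl_proj : 'M[R]_n := locked (1%:M - hyperbolic_proj).
Local Notation P := compl_proj.

Lemma compl_projE : P = 1%:M - hyperbolic_proj.
Proof. by rewrite /compl_proj -lock. Qed.

Lemma mulmx_compl_proj u : u *m P = u - (sp S u z *: e + sp S u e *: z).
Proof. by rewrite compl_projE mulmxBr mulmx1 mulmxDr !mulmxA !spE !mul_scalar_mx. Qed.

Lemma compl_proj_z u : sp S (u *m P) z = 0.
Proof. by rewrite mulmx_compl_proj spBl spDl !spZl ez z_iso mulr1 mulr0 addr0 subrr. Qed.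

Lemma compl_proj_e u : sp S (u *m P) e = 0.
Proof.
by rewrite mulmx_compl_proj spBl spDl !spZl e_iso (spC S_sym z e) ez mulr0 mulr1 add0r subrr.
Qed.

Lemma compl_proj_sub (u : V) : (u *m P <= hyperbolic_compl)%MS.
Proof. by rewrite sub_hyperbolic_compl compl_proj_z compl_proj_e eqxx. Qed.

Lemma compl_proj_id (u : V) : (u <= hyperbolic_compl)%MS -> u *m P = u.
Proof.
rewrite sub_hyperbolic_compl mulmx_compl_proj => /andP[/eqP-> /eqP->].
by rewrite !scale0r addr0 subr0.
Qed.

Lemma compl_projK : P *m P = P.
Proof. by apply: mulmx_rV_eq => u; rewrite mulmxA (compl_proj_id (compl_proj_sub u)). Qed.

Lemma compl_proj_adjoint : P *m S = S *m P^T.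
Proof.
rewrite compl_projE /hyperbolic_proj mulmxBl mul1mx linearB /= trmx1 mulmxBr mulmx1.
rewrite linearD /= !trmx_mul !trmxK S_sym mulmxDl mulmxDr !mulmxA.
by rewrite (addrC (S *m e^T *m z *m S)).
Qed.

Lemma z_compl_proj : z *m P = 0.
Proof. by rewrite mulmx_compl_proj z_iso (spC S_sym z e) ez scale0r scale1r add0r subrr. Qed.

Lemma e_compl_proj : e *m P = 0.
Proof. by rewrite mulmx_compl_proj e_iso ez scale0r scale1r addr0 subrr. Qed.

Lemma compl_proj_dual (v : V) : v *m P = 0 -> P *m (S *m v^T) = 0.
Proof. by move=> vP0; rewrite mulmxA compl_proj_adjoint -mulmxA -trmx_mul vP0 trmx0 mulmx0. Qed.

Variable sg : R.
Hypothesis compl_definite :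
  forall w, (w <= hyperbolic_compl)%MS -> w != 0 -> 0 < sg * sp S w w.

(* A positive definite metric (sp_compl_metric) for which the compression
   P A P of an S-skew A is again skew (compression_skew). *)
Definition compl_metric : 'M[R]_n :=
  sg *: (P *m S *m P^T) + S *m z^T *m (S *m z^T)^T + S *m e^T *m (S *m e^T)^T.
Local Notation G := compl_metric.

Lemma compl_metric_sym : G^T = G.
Proof.
have sym_gram (X : 'M[R]_n) : (X *m S *m X^T)^T = X *m S *m X^T.
  by rewrite !trmx_mul trmxK S_sym mulmxA.
have sym_sqr (X : 'M[R]_(n, 1)) : (X *m X^T)^T = X *m X^T by rewrite trmx_mul trmxK.
by rewrite /compl_metric !linearD /= linearZ /= sym_gram !sym_sqr.
Qed.

Lemma sp_compl_metric u :
  sp G u u = sg * sp S (u *m P) (u *m P) + sp S u z ^+ 2 + sp S u e ^+ 2.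
Proof.
have gram (X : 'M[R]_(n, 1)) : u *m (X *m X^T) *m u^T = u *m X *m (u *m X)^T.
  by rewrite trmx_mul !mulmxA.
have uSv v : u *m (S *m v^T) = (sp S u v)%:M by rewrite mulmxA spE.
have uGPu : u *m (P *m S *m P^T) *m u^T = (sp S (u *m P) (u *m P))%:M.
  by rewrite -spE trmx_mul !mulmxA.
rewrite [LHS]/sp /compl_metric !mulmxDr !mulmxDl -scalemxAr -scalemxAl uGPu !gram !uSv.
by rewrite !tr_scalar_mx -!scalar_mxM -!expr2 !mxE !mulr1n.
Qed.

Lemma compl_metric_pos u : u != 0 -> 0 < sp G u u.
Proof.
move=> u_neq0; rewrite sp_compl_metric.
have uz2 := sqr_ge0 (sp S u z); have ue2 := sqr_ge0 (sp S u e).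
have [uP0 | uP_neq0] := eqVneq (u *m P) 0; last first.
  by have := compl_definite (compl_proj_sub u) uP_neq0; lra.
have uE : u = sp S u z *: e + sp S u e *: z by apply/eqP; rewrite -subr_eq0 -mulmx_compl_proj uP0.
rewrite uP0 sp0l mulr0 add0r.
have [uz | uz] := eqVneq (sp S u z) 0; last first.
  have : 0 < sp S u z ^+ 2 by rewrite exprn_even_gt0 //= uz.
  lra.
have [ue | ue] := eqVneq (sp S u e) 0; last first.
  have : 0 < sp S u e ^+ 2 by rewrite exprn_even_gt0 //= ue.
  lra.
by move: u_neq0; rewrite uE uz ue !scale0r addr0 eqxx.
Qed.

Variable A : 'M[R]_n.
Hypotheses (A_skew : A *m S = - (S *m A^T)) (zA : z *m A = 0).

Lemma skew_dual_z : A *m (S *m z^T) = 0.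
Proof. by rewrite mulmxA A_skew mulNmx -mulmxA -trmx_mul zA trmx0 mulmx0 oppr0. Qed.

Lemma compression_skew : P *m A *m P *m G = - (G *m (P *m A *m P)^T).
Proof.
have PSP : P *m S *m P^T = S *m P^T by rewrite compl_proj_adjoint -mulmxA -trmx_mul compl_projK.
have PPT : P^T *m P^T = P^T by rewrite -trmx_mul compl_projK.
have Pz := compl_proj_dual z_compl_proj; have Pe := compl_proj_dual e_compl_proj.
rewrite /compl_metric PSP; set c := S *m z^T in Pz *; set d := S *m e^T in Pe *.
have Ncc : P *m A *m P *m (c *m c^T) = 0 by rewrite mulmxA -(mulmxA (P *m A)) Pz mulmx0 mul0mx.
have Ndd : P *m A *m P *m (d *m d^T) = 0 by rewrite mulmxA -(mulmxA (P *m A)) Pe mulmx0 mul0mx.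
have ccP : c *m c^T *m P^T = 0 by rewrite -mulmxA -trmx_mul Pz trmx0 mulmx0.
have ddP : d *m d^T *m P^T = 0 by rewrite -mulmxA -trmx_mul Pe trmx0 mulmx0.
have ccN : c *m c^T *m (P *m A *m P)^T = 0 by rewrite [(_ *m P)^T]trmx_mul mulmxA ccP mul0mx.
have ddN : d *m d^T *m (P *m A *m P)^T = 0 by rewrite [(_ *m P)^T]trmx_mul mulmxA ddP mul0mx.
rewrite !mulmxDr !mulmxDl Ncc Ndd ccN ddN !addr0 -scalemxAr -scalemxAl -scalerN.
congr (_ *: _); transitivity (P *m (A *m S) *m P^T).
  by rewrite !mulmxA -(mulmxA (P *m A) P S) compl_proj_adjoint !mulmxA -(mulmxA _ P^T P^T) PPT.
rewrite A_skew mulmxN mulNmx; congr (- _).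
by rewrite !trmx_mul !mulmxA -(mulmxA S P^T P^T) PPT -compl_proj_adjoint.
Qed.

Lemma compression_trace : \tr (P *m A *m P *m (P *m A *m P)) = \tr (A *m A).
Proof.
have APA : A *m P *m A = A *m A.
  apply: mulmx_rV_eq => u; rewrite !mulmxA mulmx_compl_proj (sp_skew _ _ A_skew) zA sp0r.
  by rewrite oppr0 scale0r add0r mulmxBl -scalemxAl zA scaler0 subr0.
have tr_hyp : \tr (hyperbolic_proj *m (A *m A)) = 0.
  rewrite /hyperbolic_proj mulmxDl raddfD /= -!(mulmxA (S *m _)).
  rewrite (mxtrace_mulC (S *m z^T)) (mxtrace_mulC (S *m e^T)) -!mulmxA skew_dual_z.
  by rewrite !mulmxA zA !mul0mx !mulmx0 mxtrace0 addr0.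
transitivity (\tr (P *m (A *m (P *m P) *m A) *m P)); first by rewrite !mulmxA.
rewrite compl_projK APA mxtrace_mulC (mulmxA P P) compl_projK compl_projE mulmxBl mul1mx.
by rewrite raddfB /= tr_hyp subr0.
Qed.

Lemma skew_trace0_orth_line : \tr (A *m A) = 0 ->
  forall w, sp S w z = 0 -> exists k, w *m A = k *: z.
Proof.
move=> trAA w wz.
have N0 : P *m A *m P = 0.
  apply: (skew_sqr_trace_eq0 compl_metric_sym compl_metric_pos compression_skew).
  by rewrite compression_trace.
have wPAP : w *m P *m A *m P = 0 by rewrite -(mulmxA w) -mulmxA N0 mulmx0.
exists (sp S (w *m P *m A) e).
have wE : w = w *m P + sp S w e *: z by rewrite mulmx_compl_proj wz scale0r add0r subrK.
rewrite {1}wE mulmxDl -scalemxAl zA scaler0 addr0.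
move/eqP: wPAP; rewrite mulmx_compl_proj subr_eq0 => /eqP {1}->.
by rewrite (sp_skew _ _ A_skew) zA sp0r oppr0 scale0r add0r.
Qed.

End HyperbolicPair.
End Lorentzian.

Section DerivedSeries.
Variables (R : realType) (n : nat) (br : 'rV[R]_n -> 'rV[R]_n -> 'rV[R]_n).
Hypothesis br_lie : is_lie_bracket br.

Lemma br_in_derived (W : 'M[R]_n) u v :
  (u <= W)%MS -> (v <= W)%MS -> (br u v <= derived_mx br W)%MS.
Proof.
move=> /submxP[a ->] /submxP[b ->]; rewrite !mulmx_sum_row (br_suml br_lie).
apply: summx_sub => i _; rewrite (br_sumr br_lie); apply: summx_sub => j _.
rewrite (brZl br_lie) (brZr br_lie); apply/scalemx_sub/scalemx_sub.
by apply: (sumsmx_sup i) => //; apply: (sumsmx_sup j) => //; rewrite genmxE.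
Qed.

Lemma derived_sub (W X : 'M[R]_n) :
  (forall i j, (br (row i W) (row j W) <= X)%MS) -> (derived_mx br W <= X)%MS.
Proof. by move=> sub_br; apply/sumsmx_subP => i _; apply/sumsmx_subP => j _; rewrite genmxE. Qed.

Lemma derived_mono (W W' : 'M[R]_n) :
  (W <= W')%MS -> (derived_mx br W <= derived_mx br W')%MS.
Proof.
move=> sWW'; apply: derived_sub => i j.
by apply: br_in_derived; exact: submx_trans (row_sub _ _) sWW'.
Qed.

Local Notation I := (derived_mx br 1%:M).

Lemma br_in_derived1 u v : (br u v <= I)%MS.
Proof. exact: br_in_derived (submx1 _) (submx1 _). Qed.

Lemma derived1_eq0_abelian : I = 0 -> abelian_lie br.
Proof. by move=> I0 x y; apply/eqP; rewrite -submx0 -I0 br_in_derived1. Qed.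

Lemma solvable_perfect_eq0 (W : 'M[R]_n) :
  solvable_lie br -> (W <= derived_mx br W)%MS -> W = 0.
Proof.
move=> [k Dk0] W_perfect; apply/eqP; rewrite -submx0 -Dk0.
elim: k {Dk0} => [|k IHk]; first exact: submx1.
rewrite /derived_series iterS -/(derived_series br k).
apply: submx_trans W_perfect _; exact: derived_mono.
Qed.

Lemma derived1_perfect (Z : 'M[R]_n) :
  (forall a v, (v <= Z)%MS -> br a v = 0) -> row_full (I + Z)%MS ->
  (I <= derived_mx br I)%MS.
Proof.
move=> Z_central IZ_full; apply: derived_sub => i j.
have split_IZ (u : 'rV[R]_n) :
    exists2 p, (p <= I)%MS & exists2 q, (q <= Z)%MS & u = p + q.
  have /sub_addsmxP[[a b] /= ->] : (u <= I + Z)%MS by apply: submx_full.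
  by exists (a *m I); rewrite ?submxMl //; exists (b *m Z); rewrite ?submxMl.
have [p pI [q qZ ->]] := split_IZ (row i 1%:M).
have [p' p'I [q' q'Z ->]] := split_IZ (row j 1%:M).
rewrite (brDl br_lie) !(brDr br_lie) (Z_central p _ q'Z) (Z_central q _ q'Z).
by rewrite (brC br_lie q p') (Z_central p' _ qZ) oppr0 !addr0 br_in_derived.
Qed.

End DerivedSeries.

Section InvariantForm.
Variables (R : realType) (n : nat) (br : 'rV[R]_n -> 'rV[R]_n -> 'rV[R]_n) (S : 'M[R]_n).
Hypotheses (br_lie : is_lie_bracket br) (S_sym : S^T = S) (S_unit : S \in unitmx).
Hypothesis br_inv : invariant_sp br S.

Lemma ad_mx_skew x : ad_mx br x *m S = - (S *m (ad_mx br x)^T).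
Proof.
apply: sp_inj => u v.
have -> : sp (ad_mx br x *m S) u v = sp S (br x u) v by rewrite /sp mulmxA (ad_mxE br_lie).
rewrite br_inv -(ad_mxE br_lie x v).
by symmetry; rewrite /sp mulmxN mulNmx mxE trmx_mul !mulmxA.
Qed.

Local Notation I := (derived_mx br 1%:M).
Local Notation Iperp := (kermx (S *m I^T)).

Lemma sp_derived_orth v u : (v <= Iperp)%MS -> (u <= I)%MS -> sp S v u = 0.
Proof.
rewrite sub_kermx => /eqP vI0 /submxP[a ->].
by rewrite /sp trmx_mul !mulmxA -(mulmxA v) vI0 mul0mx mxE.
Qed.

Lemma derived_orth_central a v : (v <= Iperp)%MS -> br a v = 0.
Proof.
move=> vIperp; apply: (sp_nondeg S_unit) => b.
by rewrite br_inv (sp_derived_orth vIperp) ?oppr0 ?br_in_derived1.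
Qed.

Lemma derived_orth_full : (I :&: Iperp)%MS = 0 -> row_full (I + Iperp)%MS.
Proof.
move=> cap0; have rank_Iperp : \rank Iperp = (n - \rank I)%N.
  by rewrite mxrank_ker -mxrank_tr trmx_mul trmxK S_sym mxrankMfree ?row_free_unit.
apply/eqP; have := mxrank_sum_cap I Iperp; rewrite cap0 mxrank0 addn0 rank_Iperp.
by rewrite subnKC ?rank_leq_col.
Qed.

Lemma einstein_killing0 z : einstein br S -> z != 0 -> (forall a, br a z = 0) ->
  forall x y, killing br x y = 0.
Proof.
move=> [lam ricciE] z_neq0 z_central.
have ad_z0 : ad_mx br z = 0.
  by apply: mulmx_rV_eq => u; rewrite (ad_mxE br_lie) (brC br_lie) z_central oppr0 mulmx0.
have [y zy] := sp_neq0 S_unit z_neq0.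
have lam0 : lam = 0.
  move: (ricciE z y); rewrite /ricci_biinv /killing ad_z0 mul0mx mxtrace0 mulr0.
  by move/esym/eqP; rewrite mulf_eq0 (negPf zy) orbF => /eqP.
move=> x x'; move: (ricciE x x'); rewrite lam0 mul0r /ricci_biinv => /eqP.
by rewrite mulf_eq0 oppr_eq0 invr_eq0 pnatr_eq0 => /eqP.
Qed.

Lemma derived_in_line_abelian z e : sp S e z = 1 ->
  (forall x w, sp S w z = 0 -> (br x w <= z)%MS) -> abelian_lie br.
Proof.
move=> ez ad_line.
have decomp a : exists2 a', sp S a' z = 0 & exists k, a = k *: e + a'.
  exists (a - sp S a z *: e); first by rewrite spBl spZl ez mulr1 subrr.
  by exists (sp S a z); rewrite addrC subrK.
have br_line a b : (br a b <= z)%MS.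
  have [a' a'z [k ->]] := decomp a; have [b' b'z [l ->]] := decomp b.
  rewrite (brDl br_lie) !(brDr br_lie) !(brZl br_lie) !(brZr br_lie) (brxx br_lie).
  rewrite !scaler0 add0r (brC br_lie a' e) -scaleN1r.
  by rewrite !addmx_sub ?scalemx_sub ?ad_line.
have orth_central w : sp S w z = 0 -> forall a, br a w = 0.
  move=> wz a; apply: (sp_nondeg S_unit) => b; rewrite br_inv.
  by have /sub_rVP[k ->] := br_line a b; rewrite spZr // wz mulr0 oppr0.
move=> x y; have [x' x'z [k ->]] := decomp x; have [y' y'z [l ->]] := decomp y.
rewrite (brDl br_lie) !(brDr br_lie) !(brZl br_lie) !(brZr br_lie) (brxx br_lie).
by rewrite (brC br_lie x' e) !orth_central // oppr0 !scaler0 !addr0.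
Qed.

Lemma central_isotropic_abelian z : witt_index_one S -> einstein br S ->
  z != 0 -> sp S z z = 0 -> (forall a, br a z = 0) -> abelian_lie br.
Proof.
move=> witt1 einst z_neq0 z_iso z_central.
have killing0 := einstein_killing0 einst z_neq0 z_central.
have [e ez e_iso] := hyperbolic_partner S_sym S_unit z_neq0 z_iso.
have [sg compl_def] := anisotropic_definite S_sym
  (witt_index_one_compl_anisotropic S_sym z_iso ez witt1 z_neq0).
apply: (derived_in_line_abelian ez) => x w wz; rewrite -(ad_mxE br_lie); apply/sub_rVP.
apply: (skew_trace0_orth_line S_sym z_iso e_iso ez compl_def (ad_mx_skew x)) => //.
  by rewrite (ad_mxE br_lie).
exact: killing0.
Qed.

End InvariantForm.

Theorem corollary5p2 (R : realType) (n : nat)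
  (br : 'rV[R]_n -> 'rV[R]_n -> 'rV[R]_n) (S : 'M[R]_n) :
  is_lie_bracket br -> solvable_lie br ->
  scalar_product S -> witt_index_one S -> invariant_sp br S ->
  einstein br S ->
  abelian_lie br.
Proof.
move=> br_lie solvable [S_sym S_unit] witt1 br_inv einst.
pose I := derived_mx br 1%:M; pose Iperp := kermx (S *m I^T).
have [cap0 | /rowV0Pn[z z_cap z_neq0]] := eqVneq (I :&: Iperp)%MS 0.
  apply: (derived1_eq0_abelian br_lie); apply: (solvable_perfect_eq0 br_lie solvable).
  apply: (derived1_perfect br_lie (derived_orth_central br_lie S_unit br_inv)).
  exact: (derived_orth_full S_sym S_unit cap0).
have zI : (z <= I)%MS by apply: submx_trans z_cap (capmxSl _ _).
have zIperp : (z <= Iperp)%MS by apply: submx_trans z_cap (capmxSr _ _).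
apply: (central_isotropic_abelian br_lie S_sym S_unit br_inv witt1 einst z_neq0).
  exact: (sp_derived_orth zIperp zI).
by move=> a; apply: (derived_orth_central br_lie S_unit br_inv a zIperp).
Qed.
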